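(* Let $\mathcal{A}$, $H(\mathcal{A})$, $H(\mathcal{A}^* )$ be as in the context, and let $a,b'$ be non-negative integers. Define $$S=\sum_\alpha(-1)^{|\alpha|}e_\alpha\otimes e^\alpha\in H(\mathcal{A})^{\otimes2},\quad \tilde S=\sum_\alpha\tilde e_\alpha\otimes\tilde e^\alpha\in H(\mathcal{A}^* )^{\otimes2},$$ $$S'=\sum_\alpha(-1)^{(a+b'+1)|\alpha|}\tilde e_\alpha\otimes e^\alpha\in H(\mathcal{A}^* )\otimes H(\mathcal{A}),\quad S''=\sum_\alpha(-1)^{(a+b')|\alpha|}e_\alpha\otimes\tilde e^\alpha\in H(\mathcal{A})\otimes H(\mathcal{A}^* ).$$ Then, with leg-numbering notation $X_{ij}$ placing the two tensor factors of $X$ in positions $i,j$ of a triple tensor product (with the appropriate algebra $H(\mathcal{A})$ or $H(\mathcal{A}^* )$ in each position) and $1$ elsewhere, the following hold: $$S'_{12}S'_{13}S_{23}=S_{23}S'_{12},\qquad \tilde S_{12}S'_{23}=S'_{23}S'_{13}\tilde S_{12},$$ $$S_{12}S''_{13}S''_{23}=S''_{23}S_{12},\qquad S''_{12}\tilde S_{23}=\tilde S_{23}S''_{13}S''_{12},$$ $$S'_{12}\tilde S_{13}S''_{23}=S''_{23}S'_{12},\qquad S''_{12}S'_{23}=S'_{23}S_{13}S''_{12}.$$ Moreover $\tilde S$ satisfies $\tilde S_{12}\tilde S_{23}=\tilde S_{23}\tilde S_{13}\tilde S_{12}$.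
   Context: Graded tensor products: $(a_1\otimes b_1)(a_2\otimes b_2)=(-1)^{|b_1||a_2|}a_1a_2\otimes b_1b_2$. $\mathcal{A}$ is a $\mathbb{Z}_2$-graded Hopf algebra over $\mathbb{C}$ with homogeneous basis $e_\alpha$ of degree $|\alpha|$, $e_\alpha e_\beta=\sum_\gamma m^\gamma_{\alpha\beta}e_\gamma$, $\Delta(e_\alpha)=\sum\mu^{\beta\gamma}_\alpha e_\beta\otimes e_\gamma$; $\mathcal{A}^*$ is the dual Hopf algebra with dual basis $e^\alpha$. The Heisenberg double $H(\mathcal{A})$ is spanned by $e^\alpha\otimes e_\beta$ with product $(e^\alpha\otimes e_\beta)(e^\gamma\otimes e_\delta)=\sum(-1)^{|\beta||\gamma|+|\pi||\epsilon|+|\pi||\alpha|+|\epsilon|}m^\gamma_{\pi\epsilon}m^\tau_{\rho\delta}\mu^{\epsilon\rho}_\beta\mu^{\alpha\pi}_\sigma e^\sigma\otimes e_\tau$; write $e_\alpha=1\otimes e_\alpha$, $e^\alpha=e^\alpha\otimes1$. The Heisenberg double $H(\mathcal{A}^* )$ is spanned by $\tilde e_\alpha\otimes\tilde e^\beta$ with product $(\tilde e_\alpha\otimes\tilde e^\beta)(\tilde e_\gamma\otimes\tilde e^\delta)=\sum(-1)^{|\rho||\pi|+|\rho||\epsilon|+|\pi||\delta|}\mu^{\rho\epsilon}_\gamma\mu^{\pi\delta}_\tau m^\beta_{\epsilon\pi}m^\sigma_{\alpha\rho}\tilde e_\sigma\otimes\tilde e^\tau$; write $\tilde e_\alpha=\tilde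 e_\alpha\otimes1$, $\tilde e^\alpha=1\otimes\tilde e^\alpha$, of degree $|\alpha|$. In the six identities, the positions carry: first identity $H(\mathcal{A}^* ),H(\mathcal{A}),H(\mathcal{A})$; second $H(\mathcal{A}^* ),H(\mathcal{A}^* ),H(\mathcal{A})$; third $H(\mathcal{A}),H(\mathcal{A}),H(\mathcal{A}^* )$; fourth $H(\mathcal{A}),H(\mathcal{A}^* ),H(\mathcal{A}^* )$; fifth $H(\mathcal{A}^* ),H(\mathcal{A}),H(\mathcal{A}^* )$; sixth $H(\mathcal{A}),H(\mathcal{A}^* ),H(\mathcal{A})$. *)

From HB Require Import structures.
From mathcomp Require Import all_boot all_order all_algebra.
Set Implicit Arguments. Unset Strict Implicit. Unset Printing Implicit Defensive.
Import Order.TTheory GRing.Theory Num.Theory.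
Local Open Scope ring_scope.

(* Data of a finite-dimensional Z2-graded algebra/coalgebra A with homogeneous
   basis e_a (a : hI), given by structure constants:
     hdeg a     = |a| (true = odd)
     hm a b c   = m^c_{ab}      (e_a e_b = sum_c m^c_{ab} e_c)
     hmu a b c  = mu^{bc}_a     (Delta e_a = sum_{b,c} mu^{bc}_a e_b (x) e_c)
     hu a       = coefficient of e_a in the unit 1_A
     heps a     = eps(e_a), the counit (= the unit 1_{A_dual} = sum_a eps(e_a) e^a) *)
Record hopf_data (C : comNzRingType) := HopfData {
  hI : finType;
  hdeg : hI -> bool;
  hm : hI -> hI -> hI -> C;
  hmu : hI -> hI -> hI -> C;
  hu : hI -> C;
  heps : hI -> C
}.

Section HopfDefs.
Variable C : comNzRingType.
Variable A : hopf_data C.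
Local Notation I := (hI A).
Local Notation deg := (@hdeg _ A).
Local Notation m := (@hm _ A).
Local Notation mu := (@hmu _ A).
Local Notation u := (@hu _ A).
Local Notation eps := (@heps _ A).

Definition sgn (b : bool) : C := if b then -1 else 1.
Definition kdelta (x y : I) : C := (x == y)%:R.

Definition homogeneous_structure : Prop :=
  [/\ (forall a b c, m a b c != 0 -> deg c = deg a (+) deg b),
      (forall a b c, mu a b c != 0 -> deg a = deg b (+) deg c),
      (forall a, u a != 0 -> deg a = false) &
      (forall a, eps a != 0 -> deg a = false)].

Definition mul_assoc : Prop := forall a b c x,
  \sum_(d : I) m a b d * m d c x = \sum_(d : I) m b c d * m a d x.

Definition mul_unit : Prop := forall b c,
  \sum_(a : I) u a * m a b c = kdelta b c /\ \sum_(a : I) u a * m b a c = kdelta b c.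

Definition comul_coassoc : Prop := forall a x y c,
  \sum_(d : I) mu a d c * mu d x y = \sum_(d : I) mu a x d * mu d y c.

Definition comul_counit : Prop := forall a c,
  \sum_(b : I) eps b * mu a b c = kdelta a c /\ \sum_(b : I) eps b * mu a c b = kdelta a c.

(* Delta(e_a e_b) = Delta(e_a) Delta(e_b) in the graded tensor product A (x) A *)
Definition comul_multiplicative : Prop := forall a b x y,
  \sum_(c : I) m a b c * mu c x y =
  \sum_(a1 : I) \sum_(a2 : I) \sum_(b1 : I) \sum_(b2 : I)
     sgn (deg a2 && deg b1) * mu a a1 a2 * mu b b1 b2 * m a1 b1 x * m a2 b2 y.

Definition comul_unital : Prop := forall x y,
  \sum_(a : I) u a * mu a x y = u x * u y.

Definition counit_multiplicative : Prop :=
  (forall a b, \sum_(c : I) m a b c * eps c = eps a * eps b) /\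
  \sum_(a : I) u a * eps a = 1.

(* antipode S(e_b) = sum_d s b d e_d *)
Definition has_antipode : Prop := exists s : I -> I -> C, forall a x,
  \sum_(b : I) \sum_(c : I) mu a b c * (\sum_(d : I) s b d * m d c x) = eps a * u x /\
  \sum_(b : I) \sum_(c : I) mu a b c * (\sum_(d : I) s c d * m b d x) = eps a * u x.

Definition is_graded_hopf : Prop :=
  [/\ homogeneous_structure, mul_assoc, mul_unit, comul_coassoc &
      [/\ comul_counit, comul_multiplicative, comul_unital,
      counit_multiplicative & has_antipode]].

(* Both H(A) and H(A_dual) have basis indexed by pairs (s,t) : I * I:
   H(A):   e^s (x) e_t ;   H(A_dual):  ~e_s (x) ~e^t ; degree |s|+|t|. *)
Definition J := (I * I)%type.
Definition degJ (k : J) : bool := deg k.1 (+) deg k.2.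

(* Structure constants: coefficient of basis element z in x * y. *)
(* (e^al (x) e_be)(e^ga (x) e_de) = sum (-1)^{|be||ga|+|pi||ep|+|pi||al|+|ep|}
     m^ga_{pi ep} m^tau_{rho de} mu^{ep rho}_be mu^{al pi}_sig e^sig (x) e_tau *)
Definition PH (x y z : J) : C :=
  \sum_(p : I) \sum_(e : I) \sum_(r : I)
    sgn ((deg x.2 && deg y.1) (+) (deg p && deg e) (+) (deg p && deg x.1) (+) deg e)
    * m p e y.1 * m r y.2 z.2 * mu x.2 e r * mu z.1 x.1 p.

(* (~e_al (x) ~e^be)(~e_ga (x) ~e^de) = sum (-1)^{|rho||pi|+|rho||ep|+|pi||de|}
     mu^{rho ep}_ga mu^{pi de}_tau m^be_{ep pi} m^sig_{al rho} ~e_sig (x) ~e^tau *)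
Definition PHt (x y z : J) : C :=
  \sum_(r : I) \sum_(e : I) \sum_(p : I)
    sgn ((deg r && deg p) (+) (deg r && deg e) (+) (deg p && deg y.2))
    * mu y.1 r e * mu z.2 p y.2 * m e p x.2 * m x.1 r z.1.

(* elements of H(A) / H(A_dual) as coefficient vectors on J *)
Definition oneH (k : J) : C := eps k.1 * u k.2.          (* 1 (x) 1 in H(A) *)
Definition oneHt (k : J) : C := u k.1 * eps k.2.         (* 1 (x) 1 in H(A_dual) *)
Definition eH_lo (al : I) (k : J) : C := eps k.1 * kdelta k.2 al.  (* e_al = 1 (x) e_al *)
Definition eH_up (al : I) (k : J) : C := kdelta k.1 al * u k.2.    (* e^al = e^al (x) 1 *)
Definition eHt_lo (al : I) (k : J) : C := kdelta k.1 al * eps k.2. (* ~e_al = ~e_al (x) 1 *)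
Definition eHt_up (al : I) (k : J) : C := u k.1 * kdelta k.2 al.   (* ~e^al = 1 (x) ~e^al *)

Definition S_H (k1 k2 : J) : C :=
  \sum_(al : I) sgn (deg al) * eH_lo al k1 * eH_up al k2.
Definition S_t (k1 k2 : J) : C :=
  \sum_(al : I) eHt_lo al k1 * eHt_up al k2.
Definition S_p (a b' : nat) (k1 k2 : J) : C :=
  \sum_(al : I) sgn (odd (a + b' + 1) && deg al) * eHt_lo al k1 * eH_up al k2.
Definition S_pp (a b' : nat) (k1 k2 : J) : C :=
  \sum_(al : I) sgn (odd (a + b') && deg al) * eH_lo al k1 * eHt_up al k2.

(* triple graded tensor product of algebras with structure constants P1 P2 P3 *)
Definition mul3 (P1 P2 P3 : J -> J -> J -> C) (x y : J -> J -> J -> C) :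
    J -> J -> J -> C :=
  fun k1 k2 k3 =>
  \sum_(i1 : J) \sum_(i2 : J) \sum_(i3 : J) \sum_(j1 : J) \sum_(j2 : J) \sum_(j3 : J)
    sgn ((degJ i2 && degJ j1) (+) (degJ i3 && degJ j1) (+) (degJ i3 && degJ j2))
    * x i1 i2 i3 * y j1 j2 j3 * P1 i1 j1 k1 * P2 i2 j2 k2 * P3 i3 j3 k3.

Definition leg12 (one3 : J -> C) (X : J -> J -> C) : J -> J -> J -> C :=
  fun k1 k2 k3 => X k1 k2 * one3 k3.
Definition leg13 (one2 : J -> C) (X : J -> J -> C) : J -> J -> J -> C :=
  fun k1 k2 k3 => X k1 k3 * one2 k2.
Definition leg23 (one1 : J -> C) (X : J -> J -> C) : J -> J -> J -> C :=
  fun k1 k2 k3 => one1 k1 * X k2 k3.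

End HopfDefs.

(* Each leg S_ij is a sum of pure tensors of homogeneous generators, so a
   product of legs is computed factor by factor, up to a Koszul sign, from the
   multiplication tables of the generators e_a, e^a of H(A) and ~e_a, ~e^a of
   H(A_dual): e^a e_c and ~e_a ~e^c are basis elements, e^a e^c and ~e^a ~e^c
   are given by the coproduct, e_a e_c and ~e_a ~e_c by the product, and the
   mixed products e_a e^c and ~e^a ~e_c by both.  Comparing coefficients, the
   Kronecker deltas coming from the basis elements collapse all but one
   summation on each side, and the remaining sums agree term by term, the signs
   matching because the structure constants are homogeneous. *)

From Pilot Require Import Defs.
From HB Require Import structures.
From mathcomp Require Import all_boot all_order all_algebra complex.
From mathcomp Require Import boolp reals ring.
Set Implicit Arguments. Unset Strict Implicit. Unset Printing Implicit Defensive.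
Import GRing.Theory Num.Theory.
Local Open Scope ring_scope.

Section GradedTensors.
Variables (C : comNzRingType) (A : hopf_data C).
Local Notation I := (hI A).
Local Notation J := (J A).
Local Notation degJ := (@degJ _ A).
Local Notation kd := (@kdelta _ A).

Lemma sgnD b1 b2 : sgn C b1 * sgn C b2 = sgn C (b1 (+) b2).
Proof. by case: b1; case: b2; rewrite /sgn /= ?mulrN ?mulNr ?opprK ?mulr1. Qed.

Lemma kdeltaC (a b : I) : kd a b = kd b a.
Proof. by rewrite /kdelta eq_sym. Qed.

Lemma kdelta_eq (a b : I) : kd a b != 0 -> a = b.
Proof. by rewrite /kdelta; case: (a =P b) => // _; rewrite eqxx. Qed.

Lemma sum_kdelta (F : I -> C) a : \sum_x kd x a * F x = F a.
Proof.
by rewrite (big_only1 a) // ?/kdelta ?eqxx ?mul1r // => x /negPf->; rewrite mul0r.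
Qed.

Lemma sum_kdeltaC (F : I -> C) a : \sum_x kd a x * F x = F a.
Proof. under eq_bigr do rewrite kdeltaC. exact: sum_kdelta. Qed.

Lemma sum_mul_kdelta (F : I -> C) a : \sum_x F x * kd x a = F a.
Proof. under eq_bigr do rewrite mulrC. exact: sum_kdelta. Qed.

Lemma mulr_suml2 (K1 K2 : finType) (F : K1 -> K2 -> C) x :
  (\sum_i \sum_j F i j) * x = \sum_i \sum_j F i j * x.
Proof. by rewrite mulr_suml; apply: eq_bigr => i _; rewrite mulr_suml. Qed.

Lemma mulr_sumr2 (K1 K2 : finType) (F : K1 -> K2 -> C) x :
  x * (\sum_i \sum_j F i j) = \sum_i \sum_j x * F i j.
Proof. by rewrite mulr_sumr; apply: eq_bigr => i _; rewrite mulr_sumr. Qed.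

Lemma mulr_sumr3 (K : finType) (F : K -> K -> K -> C) x :
  x * (\sum_a \sum_b \sum_c F a b c) = \sum_a \sum_b \sum_c x * F a b c.
Proof. by rewrite mulr_sumr2; do 2!apply: eq_bigr => ? _; rewrite mulr_sumr. Qed.

Lemma exchange_big2 (K : finType) (F : K -> K -> K -> C) :
  \sum_x \sum_a \sum_b F x a b = \sum_a \sum_b \sum_x F x a b.
Proof. by rewrite exchange_big; apply: eq_bigr => a _; rewrite exchange_big. Qed.

Lemma exchange_big3 (K : finType) (F : K -> K -> K -> K -> C) :
  \sum_x \sum_a \sum_b \sum_c F x a b c = \sum_a \sum_b \sum_c \sum_x F x a b c.
Proof.
rewrite exchange_big; apply: eq_bigr => a _.
exact: (exchange_big2 (fun x b c => F x a b c)).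
Qed.

Lemma sum_pair (K1 K2 : finType) (F : K1 * K2 -> C) :
  \sum_p F p = \sum_a \sum_b F (a, b).
Proof. by rewrite pair_bigA; apply: eq_bigr => -[]. Qed.

Lemma sum_neq0 (K : finType) (F : K -> C) : \sum_x F x != 0 -> exists x, F x != 0.
Proof.
case: (pickP (fun x => F x != 0)) => [x Fx _|F0]; first by exists x.
by rewrite big1 ?eqxx // => x _; apply/eqP/negbFE/F0.
Qed.

Lemma mul_neq0l (x y : C) : x * y != 0 -> x != 0.
Proof. by apply: contraNneq => ->; rewrite mul0r. Qed.

Lemma mul_neq0r (x y : C) : x * y != 0 -> y != 0.
Proof. by apply: contraNneq => ->; rewrite mulr0. Qed.

Definition mulsc (P : J -> J -> J -> C) (v w : J -> C) : J -> C :=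
  fun z => \sum_x \sum_y v x * w y * P x y z.

Definition homog (d : bool) (v : J -> C) := forall k, v k != 0 -> degJ k = d.

Definition graded (P : J -> J -> J -> C) :=
  forall x y z, P x y z != 0 -> degJ z = degJ x (+) degJ y.

Lemma homog_mulsc P d e v w : graded P -> homog d v -> homog e w ->
  homog (d (+) e) (mulsc P v w).
Proof.
move=> gP hv hw z /sum_neq0 [x /sum_neq0 [y vwP]].
have vw := mul_neq0l vwP.
by rewrite (gP _ _ _ (mul_neq0r vwP)) (hv _ (mul_neq0l vw)) (hw _ (mul_neq0r vw)).
Qed.

Lemma mulscEr P v w z : mulsc P v w z = \sum_y w y * \sum_x v x * P x y z.
Proof.
rewrite /mulsc exchange_big; apply: eq_bigr => y _; rewrite big_distrr.
by apply: eq_bigr => x _ /=; ring.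
Qed.

Lemma mulscEl P v w z : mulsc P v w z = \sum_x v x * \sum_y w y * P x y z.
Proof.
rewrite /mulsc; apply: eq_bigr => x _; rewrite big_distrr.
by apply: eq_bigr => y _ /=; ring.
Qed.

Lemma sumJ_kdelta1 (f : I -> C) g (F : J -> C) :
  \sum_(y : J) kd y.1 g * f y.2 * F y = \sum_b f b * F (g, b).
Proof.
rewrite sum_pair /=; under eq_bigr => a _ do under eq_bigr => b _ do rewrite -!mulrA.
by under eq_bigr => a _ do rewrite -big_distrr /=; rewrite sum_kdelta.
Qed.

Lemma sumJ_kdelta2 (f : I -> C) g (F : J -> C) :
  \sum_(y : J) f y.1 * kd y.2 g * F y = \sum_a f a * F (a, g).
Proof.
rewrite sum_pair /=; apply: eq_bigr => a _.
by under eq_bigr => b _ do rewrite [f a * _]mulrC -!mulrA; rewrite sum_kdelta.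
Qed.

Lemma sumJ_prod (f g : I -> C) (F : J -> C) :
  \sum_(y : J) f y.1 * g y.2 * F y = \sum_a f a * \sum_b g b * F (a, b).
Proof.
rewrite sum_pair /=; apply: eq_bigr => a _; rewrite big_distrr.
by apply: eq_bigr => b _ /=; ring.
Qed.

Lemma sumJ_prodC (f g : I -> C) (F : J -> C) :
  \sum_(y : J) f y.1 * g y.2 * F y = \sum_b g b * \sum_a f a * F (a, b).
Proof.
rewrite sum_pair exchange_big /=; apply: eq_bigr => b _.
by rewrite big_distrr; apply: eq_bigr => a _ /=; ring.
Qed.

Lemma sumJ_kdelta (v : J -> C) z :
  \sum_(y : J) v y * (kd y.2 z.2 * kd z.1 y.1) = v z.
Proof.
rewrite sum_pair /=; transitivity (\sum_a kd a z.1 * \sum_b kd b z.2 * v (a, b)).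
  apply: eq_bigr => a _; rewrite big_distrr; apply: eq_bigr => b _ /=.
  by rewrite [kd z.1 a]kdeltaC; ring.
by under eq_bigr => a _ do rewrite sum_kdelta; rewrite sum_kdelta; case: z.
Qed.

Definition tsum2 (c : I -> C) (F G : I -> J -> C) : J -> J -> C :=
  fun k1 k2 => \sum_al c al * F al k1 * G al k2.

Definition tsum3 (K : finType) (c : K -> C) (f g h : K -> J -> C) : J -> J -> J -> C :=
  fun k1 k2 k3 => \sum_x c x * f x k1 * g x k2 * h x k3.

Lemma leg12_tsum2 o c F G : leg12 o (tsum2 c F G) = tsum3 c F G (fun=> o).
Proof.
apply: funext => k1; apply: funext => k2; apply: funext => k3.
by rewrite /leg12 /tsum3 big_distrl.
Qed.

Lemma leg13_tsum2 o c F G : leg13 o (tsum2 c F G) = tsum3 c F (fun=> o) G.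
Proof.
apply: funext => k1; apply: funext => k2; apply: funext => k3.
by rewrite /leg13 /tsum3 big_distrl; apply: eq_bigr => al _ /=; ring.
Qed.

Lemma leg23_tsum2 o c F G : leg23 o (tsum2 c F G) = tsum3 c (fun=> o) F G.
Proof.
apply: funext => k1; apply: funext => k2; apply: funext => k3.
by rewrite /leg23 /tsum3 big_distrr; apply: eq_bigr => al _ /=; ring.
Qed.

Lemma mul_sum2_3 (F G H : J -> J -> C) s :
  s * ((\sum_i \sum_j F i j) * (\sum_i \sum_j G i j) * (\sum_i \sum_j H i j)) =
  \sum_i1 \sum_j1 \sum_i2 \sum_j2 \sum_i3 \sum_j3 s * F i1 j1 * G i2 j2 * H i3 j3.
Proof.
rewrite (mulr_suml2 F) (mulr_suml2 (fun i j => F i j * _)) mulr_sumr2.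
apply: eq_bigr => i1 _; apply: eq_bigr => j1 _.
rewrite !mulrA (mulr_sumr2 G) (mulr_suml2 (fun i j => _ * G i j)).
apply: eq_bigr => i2 _; apply: eq_bigr => j2 _.
by rewrite (mulr_sumr2 H).
Qed.

Section TripleProduct.
Variables P1 P2 P3 : J -> J -> J -> C.
Local Notation mul3 := (mul3 P1 P2 P3).

Definition tensor3 (f g h : J -> C) : J -> J -> J -> C :=
  fun k1 k2 k3 => f k1 * g k2 * h k3.

Lemma mul3_tensor3 f g h f' g' h' d2 d3 e1 e2 :
  homog d2 g -> homog d3 h -> homog e1 f' -> homog e2 g' ->
  mul3 (tensor3 f g h) (tensor3 f' g' h') =
  fun k1 k2 k3 => sgn C ((d2 && e1) (+) (d3 && e1) (+) (d3 && e2)) *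
     (mulsc P1 f f' k1 * mulsc P2 g g' k2 * mulsc P3 h h' k3).
Proof.
move=> hg hh hf' hg'.
apply: funext => k1; apply: funext => k2; apply: funext => k3.
rewrite /mul3 /mulsc /tensor3 mul_sum2_3.
under eq_bigr => i1 _ do under eq_bigr => i2 _ do rewrite exchange_big /=.
under eq_bigr => i1 _ do rewrite exchange_big /=.
under eq_bigr => i1 _ do under eq_bigr => j1 _ do under eq_bigr => i2 _ do
  rewrite exchange_big /=.
apply: eq_bigr => i1 _; apply: eq_bigr => j1 _; apply: eq_bigr => i2 _.
apply: eq_bigr => j2 _; apply: eq_bigr => i3 _; apply: eq_bigr => j3 _.
transitivity (sgn C ((degJ i2 && degJ j1) (+) (degJ i3 && degJ j1) (+) (degJ i3 && degJ j2))
   * (f i1 * f' j1 * g i2 * g' j2 * h i3 * h' j3)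
   * (P1 i1 j1 k1 * P2 i2 j2 k2 * P3 i3 j3 k3)); first by ring.
transitivity (sgn C ((d2 && e1) (+) (d3 && e1) (+) (d3 && e2))
   * (f i1 * f' j1 * g i2 * g' j2 * h i3 * h' j3)
   * (P1 i1 j1 k1 * P2 i2 j2 k2 * P3 i3 j3 k3)); last by ring.
congr (_ * _).
have [->|/hg->] := eqVneq (g i2) 0; first by rewrite !(mulr0, mul0r).
have [->|/hh->] := eqVneq (h i3) 0; first by rewrite !(mulr0, mul0r).
have [->|/hf'->] := eqVneq (f' j1) 0; first by rewrite !(mulr0, mul0r).
by have [->|/hg'->] := eqVneq (g' j2) 0; rewrite ?(mulr0, mul0r).
Qed.

Lemma exchange_big6 (K : finType) (F : J -> J -> J -> J -> J -> J -> K -> C) :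
  \sum_i1 \sum_i2 \sum_i3 \sum_j1 \sum_j2 \sum_j3 \sum_(x : K) F i1 i2 i3 j1 j2 j3 x =
  \sum_(x : K) \sum_i1 \sum_i2 \sum_i3 \sum_j1 \sum_j2 \sum_j3 F i1 i2 i3 j1 j2 j3 x.
Proof.
under eq_bigr => i1 _ do under eq_bigr => i2 _ do under eq_bigr => i3 _ do
  under eq_bigr => j1 _ do under eq_bigr => j2 _ do rewrite exchange_big.
under eq_bigr => i1 _ do under eq_bigr => i2 _ do under eq_bigr => i3 _ do
  under eq_bigr => j1 _ do rewrite exchange_big.
under eq_bigr => i1 _ do under eq_bigr => i2 _ do under eq_bigr => i3 _ do
  rewrite exchange_big.
under eq_bigr => i1 _ do under eq_bigr => i2 _ do rewrite exchange_big.
under eq_bigr => i1 _ do rewrite exchange_big.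
by rewrite exchange_big.
Qed.

Lemma mulr_sumr6 (F : J -> J -> J -> J -> J -> J -> C) x :
  x * (\sum_i1 \sum_i2 \sum_i3 \sum_j1 \sum_j2 \sum_j3 F i1 i2 i3 j1 j2 j3) =
  \sum_i1 \sum_i2 \sum_i3 \sum_j1 \sum_j2 \sum_j3 x * F i1 i2 i3 j1 j2 j3.
Proof.
rewrite big_distrr; apply: eq_bigr => i1 _; rewrite big_distrr; apply: eq_bigr => i2 _.
rewrite big_distrr; apply: eq_bigr => i3 _; rewrite big_distrr; apply: eq_bigr => j1 _.
by rewrite big_distrr; apply: eq_bigr => j2 _; rewrite big_distrr.
Qed.

Lemma mul_sum_pair (K1 K2 : finType) (X : K1 -> C) (Y : K2 -> C) s a b c :
  s * (\sum_x X x) * (\sum_y Y y) * a * b * c =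
  \sum_(p : K1 * K2) s * X p.1 * Y p.2 * a * b * c.
Proof.
transitivity ((\sum_x X x) * ((\sum_y Y y) * (s * a * b * c))); first by ring.
rewrite sum_pair big_distrl; apply: eq_bigr => x _ /=.
by rewrite big_distrl big_distrr; apply: eq_bigr => y _ /=; ring.
Qed.

Lemma mul3_tsum3 (K1 K2 : finType) (c : K1 -> C) f g h (c' : K2 -> C) f' g' h'
    dg dh df' dg' :
  (forall x, homog (dg x) (g x)) -> (forall x, homog (dh x) (h x)) ->
  (forall y, homog (df' y) (f' y)) -> (forall y, homog (dg' y) (g' y)) ->
  mul3 (tsum3 c f g h) (tsum3 c' f' g' h') =
  tsum3 (fun p : K1 * K2 => c p.1 * c' p.2 *
         sgn C ((dg p.1 && df' p.2) (+) (dh p.1 && df' p.2) (+) (dh p.1 && dg' p.2)))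
      (fun p => mulsc P1 (f p.1) (f' p.2)) (fun p => mulsc P2 (g p.1) (g' p.2))
      (fun p => mulsc P3 (h p.1) (h' p.2)).
Proof.
move=> hg hh hf' hg'.
apply: funext => k1; apply: funext => k2; apply: funext => k3.
transitivity (\sum_(p : K1 * K2) c p.1 * c' p.2 *
   mul3 (tensor3 (f p.1) (g p.1) (h p.1)) (tensor3 (f' p.2) (g' p.2) (h' p.2)) k1 k2 k3).
  rewrite /mul3 /tsum3.
  under eq_bigr => i1 _ do under eq_bigr => i2 _ do under eq_bigr => i3 _ do
    under eq_bigr => j1 _ do under eq_bigr => j2 _ do under eq_bigr => j3 _ do
    rewrite mul_sum_pair.
  rewrite exchange_big6; apply: eq_bigr => p _; rewrite mulr_sumr6.
  by do 6! (apply: eq_bigr => ? _); rewrite /tensor3; ring.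
rewrite /tsum3; apply: eq_bigr => p _.
by rewrite (mul3_tensor3 (f p.1) (h' p.2) (hg p.1) (hh p.1) (hf' p.2) (hg' p.2)); ring.
Qed.

End TripleProduct.
Arguments mul3_tsum3 {P1 P2 P3 K1 K2 c f g h c' f' g' h' dg dh df' dg'}.

Lemma eq_tsum3 (K : finType) (c c' : K -> C) (f g h f' g' h' : K -> J -> C) :
  (forall x k1 k2 k3,
     c x * f x k1 * g x k2 * h x k3 = c' x * f' x k1 * g' x k2 * h' x k3) ->
  tsum3 c f g h = tsum3 c' f' g' h'.
Proof.
move=> eq_cfgh; apply: funext => k1; apply: funext => k2; apply: funext => k3.
exact: eq_bigr.
Qed.

Definition unital_graded (P : J -> J -> J -> C) (o : J -> C) :=
  [/\ graded P, homog false o, left_id o (mulsc P) & right_id o (mulsc P)].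

Definition homog_family (F : I -> J -> C) := forall al, homog (hdeg al) (F al).

Section LegProducts.
Variables (P1 P2 P3 : J -> J -> J -> C) (o1 o2 o3 : J -> C).
Hypotheses (alg1 : unital_graded P1 o1) (alg2 : unital_graded P2 o2)
  (alg3 : unital_graded P3 o3).
Local Notation mul3 := (mul3 P1 P2 P3).
Local Notation deg := (@hdeg _ A).
Variables (c12 c13 c23 : I -> C) (F12 G12 F13 G13 F23 G23 : I -> J -> C).

Lemma mul3_leg12_leg23 : homog_family G12 -> homog_family F23 ->
  mul3 (leg12 o3 (tsum2 c12 F12 G12)) (leg23 o1 (tsum2 c23 F23 G23)) =
  tsum3 (fun p : I * I => c12 p.1 * c23 p.2) (fun p => F12 p.1)
    (fun p => mulsc P2 (G12 p.1) (F23 p.2)) (fun p => G23 p.2).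
Proof.
case: alg1 => _ ho1 _ mulP1_1; case: alg3 => _ ho3 mul1P3 _ hG12 hF23.
rewrite leg12_tsum2 leg23_tsum2 (mul3_tsum3 hG12 (fun=> ho3) (fun=> ho1) hF23).
by apply: eq_tsum3 => p k1 k2 k3; rewrite mulP1_1 mul1P3 !(andbF, andFb) mulr1.
Qed.

Lemma mul3_leg23_leg12 : homog_family F23 -> homog_family G23 ->
  homog_family F12 -> homog_family G12 ->
  mul3 (leg23 o1 (tsum2 c23 F23 G23)) (leg12 o3 (tsum2 c12 F12 G12)) =
  tsum3 (fun p : I * I => c23 p.1 * c12 p.2 * sgn C (deg p.1 && deg p.2))
    (fun p => F12 p.2) (fun p => mulsc P2 (F23 p.1) (G12 p.2)) (fun p => G23 p.1).
Proof.
case: alg1 => _ _ mul1P1 _; case: alg3 => _ _ _ mulP3_1 hF23 hG23 hF12 hG12.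
rewrite leg12_tsum2 leg23_tsum2 (mul3_tsum3 hF23 hG23 hF12 hG12).
apply: eq_tsum3 => -[be al] k1 k2 k3 /=; rewrite mul1P1 mulP3_1.
by case: (deg be); case: (deg al).
Qed.

Lemma mul3_leg12_leg13_leg23 : homog_family G12 -> homog_family F13 ->
  homog_family G13 -> homog_family F23 ->
  mul3 (mul3 (leg12 o3 (tsum2 c12 F12 G12)) (leg13 o2 (tsum2 c13 F13 G13)))
       (leg23 o1 (tsum2 c23 F23 G23)) =
  tsum3 (fun p : I * I * I => c12 p.1.1 * c13 p.1.2 * c23 p.2 *
           sgn C ((deg p.1.1 && deg p.1.2) (+) (deg p.1.2 && deg p.2)))
    (fun p => mulsc P1 (F12 p.1.1) (F13 p.1.2))
    (fun p => mulsc P2 (G12 p.1.1) (F23 p.2))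
    (fun p => mulsc P3 (G13 p.1.2) (G23 p.2)).
Proof.
case: alg1 => _ ho1 _ mulP1_1; case: alg2 => gP2 ho2 _ mulP2_1.
case: alg3 => gP3 ho3 mul1P3 _ hG12 hF13 hG13 hF23.
rewrite leg12_tsum2 leg13_tsum2 leg23_tsum2.
rewrite (mul3_tsum3 hG12 (fun=> ho3) hF13 (fun=> ho2)).
rewrite (mul3_tsum3 (fun p => homog_mulsc gP2 (hG12 p.1) ho2)
  (fun p => homog_mulsc gP3 ho3 (hG13 p.2)) (fun=> ho1) hF23).
apply: eq_tsum3 => -[[al be] ga] k1 k2 k3 /=.
rewrite mulP1_1 mulP2_1 mul1P3 !(andbF, andFb, addbF, addFb).
by rewrite -sgnD; ring.
Qed.

Lemma mul3_leg23_leg13_leg12 : homog_family F12 -> homog_family G12 ->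
  homog_family F13 -> homog_family G13 ->
  homog_family F23 -> homog_family G23 ->
  mul3 (mul3 (leg23 o1 (tsum2 c23 F23 G23)) (leg13 o2 (tsum2 c13 F13 G13)))
       (leg12 o3 (tsum2 c12 F12 G12)) =
  tsum3 (fun p : I * I * I => c23 p.1.1 * c13 p.1.2 * c12 p.2 *
           sgn C (deg p.1.1 && deg p.2))
    (fun p => mulsc P1 (F13 p.1.2) (F12 p.2))
    (fun p => mulsc P2 (F23 p.1.1) (G12 p.2))
    (fun p => mulsc P3 (G23 p.1.1) (G13 p.1.2)).
Proof.
case: alg1 => _ _ mul1P1 _; case: alg2 => gP2 ho2 _ mulP2_1.
case: alg3 => gP3 _ _ mulP3_1 hF12 hG12 hF13 hG13 hF23 hG23.
rewrite leg12_tsum2 leg13_tsum2 leg23_tsum2.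
rewrite (mul3_tsum3 hF23 hG23 hF13 (fun=> ho2)).
rewrite (mul3_tsum3 (fun p => homog_mulsc gP2 (hF23 p.1) ho2)
  (fun p => homog_mulsc gP3 (hG23 p.1) (hG13 p.2)) hF12 hG12).
apply: eq_tsum3 => -[[be ga] al] k1 k2 k3 /=.
rewrite mul1P1 mulP2_1 mulP3_1 !(andbF, andFb, addbF, addFb).
by rewrite -addbA !addbb addbF /= mulr1; ring.
Qed.

End LegProducts.
End GradedTensors.

Section HeisenbergDoubles.
Variables (C : comNzRingType) (A : hopf_data C).
Local Notation deg := (@hdeg _ A).
Local Notation m := (@hm _ A).
Local Notation mu := (@hmu _ A).
Local Notation u := (@hu _ A).
Local Notation eps := (@heps _ A).
Local Notation kd := (@kdelta _ A).
Local Notation sg := (@sgn C).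
Local Notation PH := (@PH _ A).
Local Notation PHt := (@PHt _ A).
Local Notation mulsc := (@mulsc _ A).
Local Notation homog := (@homog _ A).
Local Notation homog_family := (@homog_family _ A).
Local Notation tsum2 := (@tsum2 _ A).
Local Notation oH := (@oneH _ A).
Local Notation oHt := (@oneHt _ A).

Hypotheses (homA : homogeneous_structure A) (unitA : mul_unit A)
  (counitA : comul_counit A) (comul_unitA : comul_unital A)
  (counit_mulA : counit_multiplicative A).

Lemma deg_m a b c : m a b c != 0 -> deg c = deg a (+) deg b.
Proof. by case: homA => + _ _ _; apply. Qed.
Lemma deg_mu a b c : mu a b c != 0 -> deg a = deg b (+) deg c.
Proof. by case: homA => _ + _ _; apply. Qed.
Lemma deg_u a : u a != 0 -> deg a = false.
Proof. by case: homA => _ _ + _; apply. Qed.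
Lemma deg_eps a : eps a != 0 -> deg a = false.
Proof. by case: homA => _ _ _; apply. Qed.

Lemma unit_mull b c : \sum_a u a * m a b c = kd b c.
Proof. by case: (unitA b c). Qed.
Lemma unit_mulr b c : \sum_a u a * m b a c = kd b c.
Proof. by case: (unitA b c). Qed.
Lemma counit_comull a c : \sum_b eps b * mu a b c = kd a c.
Proof. by case: (counitA a c). Qed.
Lemma counit_comulr a c : \sum_b eps b * mu a c b = kd a c.
Proof. by case: (counitA a c). Qed.
Lemma comul_unit x y : \sum_a u a * mu a x y = u x * u y.
Proof. exact: comul_unitA. Qed.
Lemma counit_mul a b : \sum_c m a b c * eps c = eps a * eps b.
Proof. by case: counit_mulA. Qed.

(* [homog_case t lem]: either the coefficient [t] vanishes, which kills the
   summand, or [lem] computes the degree of one of its indices. *)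
Ltac homog_case t lem := let E := fresh in
  have [->|/lem E] := eqVneq t 0; [by rewrite !(mul0r, mulr0) | rewrite ?E].

Ltac sign_simpl := rewrite /= ?(andbF, andFb, addbF, addFb, mul1r).

Lemma PH_up_left x1 y z : \sum_x2 u x2 * PH (x1, x2) y z =
  kd y.2 z.2 * (sg (deg y.1 && deg x1) * mu z.1 x1 y.1).
Proof.
rewrite /Defs.PH /=.
under eq_bigr => x2 _ do rewrite mulr_sumr3.
rewrite exchange_big3.
transitivity (\sum_p \sum_e \sum_r sg ((deg p && deg e) (+) (deg p && deg x1) (+) deg e)
   * m p e y.1 * m r y.2 z.2 * mu z.1 x1 p * (\sum_x2 u x2 * mu x2 e r)).
  apply: eq_bigr => p _; apply: eq_bigr => e _; apply: eq_bigr => r _.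
  rewrite big_distrr; apply: eq_bigr => x2 _ /=.
  by homog_case (u x2) deg_u; sign_simpl; ring.
under eq_bigr => p _ do under eq_bigr => e _ do under eq_bigr => r _ do
  rewrite comul_unit.
transitivity (\sum_p \sum_e sg (deg p && deg x1) * mu z.1 x1 p * (u e * m p e y.1)
   * (\sum_r u r * m r y.2 z.2)).
  apply: eq_bigr => p _; apply: eq_bigr => e _.
  rewrite big_distrr; apply: eq_bigr => r _ /=.
  by homog_case (u e) deg_u; sign_simpl; ring.
under eq_bigr => p _ do under eq_bigr => e _ do rewrite unit_mull.
transitivity (\sum_p sg (deg p && deg x1) * mu z.1 x1 p * kd y.2 z.2 *
   (\sum_e u e * m p e y.1)).
  by apply: eq_bigr => p _; rewrite big_distrr; apply: eq_bigr => e _ /=; ring.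
under eq_bigr => p _ do rewrite unit_mulr.
by rewrite sum_mul_kdelta; ring.
Qed.

Lemma PH_lo_left x2 y z : \sum_x1 eps x1 * PH (x1, x2) y z =
  \sum_e \sum_r sg ((deg x2 && deg y.1) (+) (deg z.1 && deg e) (+) deg e) *
     m z.1 e y.1 * m r y.2 z.2 * mu x2 e r.
Proof.
rewrite /Defs.PH /=.
under eq_bigr => x1 _ do rewrite mulr_sumr3.
rewrite exchange_big3.
transitivity (\sum_p \sum_e \sum_r
   sg ((deg x2 && deg y.1) (+) (deg p && deg e) (+) deg e) *
     m p e y.1 * m r y.2 z.2 * mu x2 e r * (\sum_x1 eps x1 * mu z.1 x1 p)).
  apply: eq_bigr => p _; apply: eq_bigr => e _; apply: eq_bigr => r _.
  rewrite big_distrr; apply: eq_bigr => x1 _ /=.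
  by homog_case (eps x1) deg_eps; sign_simpl; ring.
under [LHS]eq_bigr => p _ do under eq_bigr => e _ do under eq_bigr => r _ do
  rewrite counit_comull.
transitivity (\sum_p kd z.1 p * \sum_e \sum_r
   sg ((deg x2 && deg y.1) (+) (deg p && deg e) (+) deg e) *
     m p e y.1 * m r y.2 z.2 * mu x2 e r).
  apply: eq_bigr => p _; rewrite big_distrr; apply: eq_bigr => e _.
  by rewrite big_distrr; apply: eq_bigr => r _ /=; ring.
by rewrite sum_kdeltaC.
Qed.

Lemma PH_lo_right x y2 z : \sum_y1 eps y1 * PH x (y1, y2) z =
  kd z.1 x.1 * m x.2 y2 z.2.
Proof.
rewrite /Defs.PH /=.
under eq_bigr => y1 _ do rewrite mulr_sumr3.
rewrite exchange_big3.
transitivity (\sum_p \sum_e \sum_r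
   sg ((deg p && deg e) (+) (deg p && deg x.1) (+) deg e) *
     m r y2 z.2 * mu x.2 e r * mu z.1 x.1 p * (\sum_y1 m p e y1 * eps y1)).
  apply: eq_bigr => p _; apply: eq_bigr => e _; apply: eq_bigr => r _.
  rewrite big_distrr; apply: eq_bigr => y1 _ /=.
  by homog_case (eps y1) deg_eps; sign_simpl; ring.
under eq_bigr => p _ do under eq_bigr => e _ do under eq_bigr => r _ do
  rewrite counit_mul.
transitivity (\sum_p (eps p * mu z.1 x.1 p) *
   \sum_r m r y2 z.2 * \sum_e eps e * mu x.2 e r).
  apply: eq_bigr => p _; rewrite big_distrr exchange_big; apply: eq_bigr => r _.
  rewrite /= !big_distrr; apply: eq_bigr => e _ /=.
  by homog_case (eps p) deg_eps; homog_case (eps e) deg_eps; sign_simpl; ring.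
under eq_bigr => p _ do under eq_bigr => r _ do rewrite counit_comull mulrC.
under eq_bigr => p _ do rewrite sum_kdeltaC.
by rewrite -big_distrl /= counit_comulr; ring.
Qed.

Lemma PHt_up_left x2 y z : \sum_x1 u x1 * PHt (x1, x2) y z =
  \sum_e \sum_p sg ((deg z.1 && deg p) (+) (deg z.1 && deg e) (+) (deg p && deg y.2)) *
     mu y.1 z.1 e * mu z.2 p y.2 * m e p x2.
Proof.
rewrite /Defs.PHt /=.
under eq_bigr => x1 _ do rewrite mulr_sumr3.
rewrite exchange_big3.
transitivity (\sum_r kd r z.1 * \sum_e \sum_p
   sg ((deg r && deg p) (+) (deg r && deg e) (+) (deg p && deg y.2)) *
     mu y.1 r e * mu z.2 p y.2 * m e p x2).
  apply: eq_bigr => r _; rewrite big_distrr; apply: eq_bigr => e _.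
  rewrite big_distrr; apply: eq_bigr => p _ /=.
  by rewrite -unit_mull big_distrl; apply: eq_bigr => x1 _ /=; ring.
by rewrite sum_kdelta.
Qed.

Lemma PHt_lo_left x1 y z : \sum_x2 eps x2 * PHt (x1, x2) y z =
  kd z.2 y.2 * m x1 y.1 z.1.
Proof.
rewrite /Defs.PHt /=.
under eq_bigr => x2 _ do rewrite mulr_sumr3.
rewrite exchange_big3.
transitivity (\sum_r m x1 r z.1 * \sum_e eps e * mu y.1 r e *
   \sum_p eps p * mu z.2 p y.2).
  apply: eq_bigr => r _; rewrite big_distrr; apply: eq_bigr => e _.
  rewrite /= !big_distrr; apply: eq_bigr => p _ /=.
  transitivity (sg ((deg r && deg p) (+) (deg r && deg e) (+) (deg p && deg y.2)) *
    mu y.1 r e * mu z.2 p y.2 * m x1 r z.1 * \sum_x2 m e p x2 * eps x2).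
    by rewrite big_distrr; apply: eq_bigr => x2 _ /=; ring.
  rewrite counit_mul.
  by homog_case (eps e) deg_eps; homog_case (eps p) deg_eps; sign_simpl; ring.
under eq_bigr => r _ do under eq_bigr => e _ do rewrite counit_comull.
under eq_bigr => r _ do rewrite -big_distrl /= counit_comulr mulrC -mulrA.
by rewrite sum_kdeltaC; ring.
Qed.

Lemma PHt_up_right x y2 z : \sum_y1 u y1 * PHt x (y1, y2) z =
  kd x.1 z.1 * (sg (deg x.2 && deg y2) * mu z.2 x.2 y2).
Proof.
rewrite /Defs.PHt /=.
under eq_bigr => y1 _ do rewrite mulr_sumr3.
rewrite exchange_big3.
transitivity (\sum_r u r * m x.1 r z.1 * \sum_p sg (deg p && deg y2) * mu z.2 p y2 *
   \sum_e u e * m e p x.2).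
  apply: eq_bigr => r _; rewrite big_distrr exchange_big; apply: eq_bigr => p _.
  rewrite /= !big_distrr; apply: eq_bigr => e _ /=.
  transitivity (sg ((deg r && deg p) (+) (deg r && deg e) (+) (deg p && deg y2)) *
    mu z.2 p y2 * m e p x.2 * m x.1 r z.1 * \sum_y1 u y1 * mu y1 r e).
    by rewrite big_distrr; apply: eq_bigr => y1 _ /=; ring.
  rewrite comul_unit.
  by homog_case (u r) deg_u; homog_case (u e) deg_u; sign_simpl; ring.
under eq_bigr => r _ do under eq_bigr => p _ do rewrite unit_mull mulrC.
under eq_bigr => r _ do rewrite sum_kdelta.
by rewrite -big_distrl /= unit_mulr; ring.
Qed.

Lemma mulH_up_up al ga : mulsc PH (eH_up al) (eH_up ga) =
  fun z => sg (deg al && deg ga) * mu z.1 al ga * u z.2.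
Proof.
apply: funext => z; rewrite mulscEr /eH_up.
under eq_bigr => y _ do rewrite sumJ_kdelta1 PH_up_left.
rewrite sumJ_kdelta1 /=.
under eq_bigr => b _ do rewrite mulrCA.
by rewrite sum_kdelta andbC; ring.
Qed.

Lemma mulH_up_lo al ga : mulsc PH (eH_up al) (eH_lo ga) =
  fun z => kd z.1 al * kd z.2 ga.
Proof.
apply: funext => z; rewrite mulscEr /eH_up /eH_lo.
under eq_bigr => y _ do rewrite sumJ_kdelta1 PH_up_left.
rewrite sumJ_kdelta2 /=.
transitivity (kd ga z.2 * \sum_a eps a * mu z.1 al a).
  rewrite big_distrr; apply: eq_bigr => a _ /=.
  by homog_case (eps a) deg_eps; sign_simpl; ring.
by rewrite counit_comulr [kd ga _]kdeltaC; ring.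
Qed.

Lemma mulH_lo_up be ga : mulsc PH (eH_lo be) (eH_up ga) =
  fun z => \sum_e sg ((deg be && deg ga) (+) (deg z.1 && deg e) (+) deg e) *
     m z.1 e ga * mu be e z.2.
Proof.
apply: funext => z; rewrite mulscEr /eH_lo /eH_up.
under eq_bigr => y _ do rewrite sumJ_kdelta2 PH_lo_left.
rewrite sumJ_kdelta1 /=.
transitivity (\sum_e \sum_r sg ((deg be && deg ga) (+) (deg z.1 && deg e) (+) deg e) *
   m z.1 e ga * mu be e r * \sum_b u b * m r b z.2).
  under eq_bigr => b _ do rewrite mulr_sumr2.
  rewrite exchange_big2; apply: eq_bigr => e _; apply: eq_bigr => r _.
  by rewrite big_distrr; apply: eq_bigr => b _ /=; ring.
under [LHS]eq_bigr => e _ do under eq_bigr => r _ do rewrite unit_mulr.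
by apply: eq_bigr => e _; rewrite sum_mul_kdelta.
Qed.

Lemma mulH_lo_lo be de : mulsc PH (eH_lo be) (eH_lo de) =
  fun z => eps z.1 * m be de z.2.
Proof.
apply: funext => z; rewrite mulscEr /eH_lo.
under eq_bigr => y _ do rewrite sumJ_kdelta2 PH_lo_left.
rewrite sumJ_kdelta2 /=.
transitivity (\sum_e \sum_r sg ((deg z.1 && deg e) (+) deg e) *
   m r de z.2 * mu be e r * \sum_a m z.1 e a * eps a).
  under eq_bigr => b _ do rewrite mulr_sumr2.
  rewrite exchange_big2; apply: eq_bigr => e _; apply: eq_bigr => r _.
  rewrite big_distrr; apply: eq_bigr => a _ /=.
  by homog_case (eps a) deg_eps; sign_simpl; ring.
under [LHS]eq_bigr => e _ do under eq_bigr => r _ do rewrite counit_mul.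
transitivity (eps z.1 * \sum_r m r de z.2 * \sum_e eps e * mu be e r).
  rewrite big_distrr exchange_big; apply: eq_bigr => r _ /=.
  rewrite !big_distrr; apply: eq_bigr => e _ /=.
  by homog_case (eps e) deg_eps; sign_simpl; ring.
congr (_ * _); under eq_bigr => r _ do rewrite counit_comull mulrC.
by rewrite sum_kdeltaC.
Qed.

Lemma mul1H v : mulsc PH oH v = v.
Proof.
apply: funext => z; rewrite mulscEr /oneH.
under eq_bigr => y _ do rewrite sumJ_prod.
under eq_bigr => y _ do under eq_bigr => a _ do rewrite PH_up_left.
transitivity (\sum_y v y * (kd y.2 z.2 * \sum_a eps a * mu z.1 a y.1)).
  apply: eq_bigr => y _; congr (_ * _); rewrite big_distrr.
  apply: eq_bigr => a _ /=.
  by homog_case (eps a) deg_eps; sign_simpl; ring.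
under eq_bigr => y _ do rewrite counit_comull.
exact: sumJ_kdelta.
Qed.

Lemma mulH1 v : mulsc PH v oH = v.
Proof.
apply: funext => z; rewrite mulscEl /oneH.
under eq_bigr => x _ do rewrite sumJ_prodC.
under eq_bigr => x _ do under eq_bigr => b _ do rewrite PH_lo_right.
transitivity (\sum_x v x * (kd x.2 z.2 * kd z.1 x.1)).
  apply: eq_bigr => x _; congr (_ * _).
  under eq_bigr => b _ do rewrite mulrCA.
  by rewrite -big_distrr /= unit_mulr kdeltaC; ring.
exact: sumJ_kdelta.
Qed.

Lemma mulHt_lo_lo al ga : mulsc PHt (eHt_lo al) (eHt_lo ga) =
  fun z => m al ga z.1 * eps z.2.
Proof.
apply: funext => z; rewrite mulscEr /eHt_lo.
under eq_bigr => y _ do rewrite sumJ_kdelta1 PHt_lo_left.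
rewrite sumJ_kdelta1 /=.
under eq_bigr => b _ do rewrite mulrCA.
by rewrite sum_kdeltaC; ring.
Qed.

Lemma mulHt_lo_up al de : mulsc PHt (eHt_lo al) (eHt_up de) =
  fun z => kd z.1 al * kd z.2 de.
Proof.
apply: funext => z; rewrite mulscEr /eHt_lo /eHt_up.
under eq_bigr => y _ do rewrite sumJ_kdelta1 PHt_lo_left.
rewrite sumJ_kdelta2 /=.
under eq_bigr => a _ do rewrite mulrCA.
by rewrite -big_distrr /= unit_mulr kdeltaC [kd al _]kdeltaC mulrC.
Qed.

Lemma mulHt_up_up be de : mulsc PHt (eHt_up be) (eHt_up de) =
  fun z => u z.1 * (sg (deg be && deg de) * mu z.2 be de).
Proof.
apply: funext => z; rewrite mulscEr /eHt_up.
under eq_bigr => y _ do rewrite sumJ_kdelta2 PHt_up_left.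
rewrite sumJ_kdelta2 /=.
transitivity (\sum_e \sum_p
   sg ((deg z.1 && deg p) (+) (deg z.1 && deg e) (+) (deg p && deg de)) *
   mu z.2 p de * m e p be * \sum_a u a * mu a z.1 e).
  under eq_bigr => b _ do rewrite mulr_sumr2.
  rewrite exchange_big2; apply: eq_bigr => e _; apply: eq_bigr => p _.
  by rewrite big_distrr; apply: eq_bigr => a _ /=; ring.
under [LHS]eq_bigr => e _ do under eq_bigr => p _ do rewrite comul_unit.
transitivity (u z.1 * \sum_p sg (deg p && deg de) * mu z.2 p de *
   \sum_e u e * m e p be).
  rewrite big_distrr exchange_big; apply: eq_bigr => p _ /=.
  rewrite !big_distrr; apply: eq_bigr => e _ /=.
  by homog_case (u z.1) deg_u; homog_case (u e) deg_u; sign_simpl; ring.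
congr (_ * _); under eq_bigr => p _ do rewrite unit_mull.
by rewrite sum_mul_kdelta.
Qed.

Lemma mulHt_up_lo be ga : mulsc PHt (eHt_up be) (eHt_lo ga) =
  fun z => \sum_e sg ((deg z.1 && deg z.2) (+) (deg z.1 && deg e)) *
     mu ga z.1 e * m e z.2 be.
Proof.
apply: funext => z; rewrite mulscEr /eHt_up /eHt_lo.
under eq_bigr => y _ do rewrite sumJ_kdelta2 PHt_up_left.
rewrite sumJ_kdelta1 /=.
transitivity (\sum_e \sum_p sg ((deg z.1 && deg p) (+) (deg z.1 && deg e)) *
   mu ga z.1 e * m e p be * \sum_b eps b * mu z.2 p b).
  under eq_bigr => b _ do rewrite mulr_sumr2.
  rewrite exchange_big2; apply: eq_bigr => e _; apply: eq_bigr => p _.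
  rewrite big_distrr; apply: eq_bigr => b _ /=.
  by homog_case (eps b) deg_eps; sign_simpl; ring.
under [LHS]eq_bigr => e _ do under eq_bigr => p _ do rewrite counit_comulr.
apply: eq_bigr => e _.
by under eq_bigr => p _ do rewrite mulrC; rewrite sum_kdeltaC.
Qed.

Lemma mul1Ht v : mulsc PHt oHt v = v.
Proof.
apply: funext => z; rewrite mulscEr /oneHt.
under eq_bigr => y _ do rewrite sumJ_prod.
under eq_bigr => y _ do under eq_bigr => a _ do rewrite PHt_lo_left.
transitivity (\sum_y v y * (kd y.2 z.2 * kd z.1 y.1)).
  apply: eq_bigr => y _; congr (_ * _).
  under eq_bigr => a _ do rewrite mulrCA.
  by rewrite -big_distrr /= unit_mull [kd z.2 _]kdeltaC [kd y.1 _]kdeltaC.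
exact: sumJ_kdelta.
Qed.

Lemma mulHt1 v : mulsc PHt v oHt = v.
Proof.
apply: funext => z; rewrite mulscEl /oneHt.
under eq_bigr => x _ do rewrite sumJ_prodC.
under eq_bigr => x _ do under eq_bigr => b _ do rewrite PHt_up_right.
transitivity (\sum_x v x * (kd x.2 z.2 * kd z.1 x.1)).
  apply: eq_bigr => x _; congr (_ * _).
  transitivity (kd x.1 z.1 * \sum_b eps b * mu z.2 x.2 b).
    rewrite big_distrr; apply: eq_bigr => b _ /=.
    by homog_case (eps b) deg_eps; sign_simpl; ring.
  by rewrite counit_comulr [kd x.1 _]kdeltaC [kd z.2 _]kdeltaC mulrC.
exact: sumJ_kdelta.
Qed.

Lemma graded_PH : graded PH.
Proof.
move=> x y z /sum_neq0 [p /sum_neq0 [e /sum_neq0 [r nz]]].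
rewrite /degJ; move: nz => /[dup] /mul_neq0r /deg_mu ->; move=> /mul_neq0l.
move=> /[dup] /mul_neq0r /deg_mu ->; move=> /mul_neq0l.
move=> /[dup] /mul_neq0r /deg_m ->; move=> /mul_neq0l /mul_neq0r /deg_m ->.
by case: (deg x.1); case: (deg p); case: (deg e); case: (deg r); case: (deg y.2).
Qed.

Lemma graded_PHt : graded PHt.
Proof.
move=> x y z /sum_neq0 [r /sum_neq0 [e /sum_neq0 [p nz]]].
rewrite /degJ; move: nz => /[dup] /mul_neq0r /deg_m ->; move=> /mul_neq0l.
move=> /[dup] /mul_neq0r /deg_m ->; move=> /mul_neq0l.
move=> /[dup] /mul_neq0r /deg_mu ->; move=> /mul_neq0l /mul_neq0r /deg_mu ->.
by case: (deg x.1); case: (deg p); case: (deg e); case: (deg r); case: (deg y.2).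
Qed.

Lemma homog_oneH : homog false oH.
Proof. by move=> k /[dup] /mul_neq0l /deg_eps + /mul_neq0r /deg_u; rewrite /degJ => -> ->. Qed.

Lemma homog_oneHt : homog false oHt.
Proof. by move=> k /[dup] /mul_neq0l /deg_u + /mul_neq0r /deg_eps; rewrite /degJ => -> ->. Qed.

Lemma homog_eH_lo : homog_family (@eH_lo _ A).
Proof.
move=> al k /[dup] /mul_neq0l /deg_eps + /mul_neq0r /kdelta_eq.
by rewrite /degJ => -> ->.
Qed.

Lemma homog_eH_up : homog_family (@eH_up _ A).
Proof.
move=> al k /[dup] /mul_neq0l /kdelta_eq + /mul_neq0r /deg_u.
by rewrite /degJ => -> ->; rewrite addbF.
Qed.

Lemma homog_eHt_lo : homog_family (@eHt_lo _ A).
Proof.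
move=> al k /[dup] /mul_neq0l /kdelta_eq + /mul_neq0r /deg_eps.
by rewrite /degJ => -> ->; rewrite addbF.
Qed.

Lemma homog_eHt_up : homog_family (@eHt_up _ A).
Proof.
move=> al k /[dup] /mul_neq0l /deg_u + /mul_neq0r /kdelta_eq.
by rewrite /degJ => -> ->.
Qed.

Lemma unital_graded_H : unital_graded PH oH.
Proof. by split; [exact: graded_PH | exact: homog_oneH | exact: mul1H | exact: mulH1]. Qed.

Lemma unital_graded_Ht : unital_graded PHt oHt.
Proof. by split; [exact: graded_PHt | exact: homog_oneHt | exact: mul1Ht | exact: mulHt1]. Qed.

Lemma S_HE : @S_H _ A = tsum2 (fun al => sg (deg al)) (@eH_lo _ A) (@eH_up _ A).
Proof. by []. Qed.

Lemma S_tE : @S_t _ A = tsum2 (fun=> 1) (@eHt_lo _ A) (@eHt_up _ A).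
Proof.
by apply: funext => k1; apply: funext => k2; apply: eq_bigr => al _; rewrite mul1r.
Qed.

Lemma S_pE a b' : @S_p _ A a b' =
  tsum2 (fun al => sg (odd (a + b' + 1) && deg al)) (@eHt_lo _ A) (@eH_up _ A).
Proof. by []. Qed.

Lemma S_ppE a b' : @S_pp _ A a b' =
  tsum2 (fun al => sg (odd (a + b') && deg al)) (@eH_lo _ A) (@eHt_up _ A).
Proof. by []. Qed.

Ltac mul_tables := rewrite ?mulH_up_up ?mulH_up_lo ?mulH_lo_up ?mulH_lo_lo
  ?mulHt_lo_lo ?mulHt_lo_up ?mulHt_up_up ?mulHt_up_lo.

Ltac expand_products :=
  under [LHS]eq_bigr => ? _ do under eq_bigr => ? _ do
    ((try under eq_bigr => ? _ do mul_tables); mul_tables);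
  under [RHS]eq_bigr => ? _ do under eq_bigr => ? _ do
    ((try under eq_bigr => ? _ do mul_tables); mul_tables);
  rewrite /eHt_lo /eHt_up /eH_lo /eH_up /=.

Ltac distribute := do ?[rewrite big_distrr /= | rewrite big_distrl /=].

Ltac kdelta_vanish :=
  let j := fresh in let jNi := fresh in let iNj := fresh in
  move=> j jNi _; have iNj := jNi; rewrite eq_sym in iNj;
  move/negPf: jNi => jNi; move/negPf: iNj => iNj;
  rewrite /kdelta ?jNi ?iNj /= ?mulr0n; do ?[apply: big1 => ? _];
  rewrite !(mul0r, mulr0).

Ltac sign_cases := rewrite ?addn1 ?oddS /sgn;
  repeat match goal with |- context [odd ?x] => case: (odd x) end;
  repeat match goal with |- context [deg ?x] => case: (deg x) end;
  rewrite /=; ring.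

#[local] Hint Resolve unital_graded_H unital_graded_Ht homog_eH_lo homog_eH_up
  homog_eHt_lo homog_eHt_up : core.

Variables a b' : nat.
Local Notation S := (@S_H _ A).
Local Notation St := (@S_t _ A).
Local Notation Sp := (@S_p _ A a b').
Local Notation Spp := (@S_pp _ A a b').

Lemma Sp12_Sp13_S23 :
  mul3 PHt PH PH (mul3 PHt PH PH (leg12 oH Sp) (leg13 oH Sp)) (leg23 oHt S)
  = mul3 PHt PH PH (leg23 oHt S) (leg12 oH Sp).
Proof.
rewrite S_pE S_HE mul3_leg12_leg13_leg23 // mul3_leg23_leg12 //.
apply: funext => -[a1 a2]; apply: funext => -[s t]; apply: funext => -[r1 r2].
rewrite /tsum3 !sum_pair /=; expand_products.
rewrite (big_only1 s) //; last by kdelta_vanish.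
rewrite exchange_big (big_only1 t) //; last by kdelta_vanish.
rewrite [RHS](big_only1 r1) //; last by kdelta_vanish.
rewrite [RHS](big_only1 a1) //; last by kdelta_vanish.
rewrite /kdelta !eqxx /=; distribute; apply: eq_bigr => e _.
by homog_case (m s e a1) deg_m; homog_case (mu r1 e t) deg_mu; sign_cases.
Qed.

Lemma St12_Sp23 :
  mul3 PHt PHt PH (leg12 oH St) (leg23 oHt Sp)
  = mul3 PHt PHt PH (mul3 PHt PHt PH (leg23 oHt Sp) (leg13 oHt Sp)) (leg12 oH St).
Proof.
rewrite S_tE S_pE mul3_leg12_leg23 // mul3_leg23_leg13_leg12 //.
apply: funext => -[a1 a2]; apply: funext => -[s t]; apply: funext => -[r1 r2].
rewrite /tsum3 !sum_pair /=; expand_products.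
rewrite (big_only1 a1) //; last by kdelta_vanish.
rewrite (big_only1 r1) //; last by kdelta_vanish.
rewrite [RHS](big_only1 s) //; last by kdelta_vanish.
rewrite [RHS]exchange_big [RHS](big_only1 t) //; last by kdelta_vanish.
rewrite /kdelta !eqxx /=; distribute; apply: eq_bigr => e _.
by homog_case (m e t a1) deg_m; homog_case (mu r1 s e) deg_mu; sign_cases.
Qed.

Lemma S12_Spp13_Spp23 :
  mul3 PH PH PHt (mul3 PH PH PHt (leg12 oHt S) (leg13 oH Spp)) (leg23 oH Spp)
  = mul3 PH PH PHt (leg23 oH Spp) (leg12 oHt S).
Proof.
rewrite S_HE S_ppE mul3_leg12_leg13_leg23 // mul3_leg23_leg12 //.
apply: funext => -[a1 a2]; apply: funext => -[s t]; apply: funext => -[r1 r2].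
rewrite /tsum3 !sum_pair /=; expand_products.
rewrite (big_only1 s) //; last by kdelta_vanish.
rewrite exchange_big (big_only1 t) //; last by kdelta_vanish.
rewrite [RHS](big_only1 r2) //; last by kdelta_vanish.
rewrite [RHS](big_only1 a2) //; last by kdelta_vanish.
rewrite /kdelta !eqxx /=; distribute; apply: eq_bigr => e _.
by homog_case (m s e a2) deg_m; homog_case (mu r2 e t) deg_mu; sign_cases.
Qed.

Lemma Spp12_St23 :
  mul3 PH PHt PHt (leg12 oHt Spp) (leg23 oH St)
  = mul3 PH PHt PHt (mul3 PH PHt PHt (leg23 oH St) (leg13 oHt Spp)) (leg12 oHt Spp).
Proof.
rewrite S_tE S_ppE mul3_leg12_leg23 // mul3_leg23_leg13_leg12 //.
apply: funext => -[a1 a2]; apply: funext => -[s t]; apply: funext => -[r1 r2].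
rewrite /tsum3 !sum_pair /=; expand_products.
rewrite (big_only1 a2) //; last by kdelta_vanish.
rewrite (big_only1 r2) //; last by kdelta_vanish.
rewrite [RHS](big_only1 s) //; last by kdelta_vanish.
rewrite [RHS]exchange_big [RHS](big_only1 t) //; last by kdelta_vanish.
rewrite /kdelta !eqxx /=; distribute; apply: eq_bigr => e _.
by homog_case (m e t a2) deg_m; homog_case (mu r2 s e) deg_mu; sign_cases.
Qed.

Lemma Sp12_St13_Spp23 :
  mul3 PHt PH PHt (mul3 PHt PH PHt (leg12 oHt Sp) (leg13 oH St)) (leg23 oHt Spp)
  = mul3 PHt PH PHt (leg23 oHt Spp) (leg12 oHt Sp).
Proof.
rewrite S_tE S_pE S_ppE mul3_leg12_leg13_leg23 // mul3_leg23_leg12 //.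
apply: funext => -[a1 a2]; apply: funext => -[s t]; apply: funext => -[r1 r2].
rewrite /tsum3 !sum_pair /=; expand_products.
rewrite (big_only1 s) //; last by kdelta_vanish.
rewrite exchange_big (big_only1 t) //; last by kdelta_vanish.
rewrite [RHS](big_only1 r2) //; last by kdelta_vanish.
rewrite [RHS](big_only1 a1) //; last by kdelta_vanish.
rewrite /kdelta !eqxx /=; distribute; apply: eq_bigr => e _.
by homog_case (m s e a1) deg_m; homog_case (mu r2 e t) deg_mu; sign_cases.
Qed.

Lemma Spp12_Sp23 :
  mul3 PH PHt PH (leg12 oH Spp) (leg23 oH Sp)
  = mul3 PH PHt PH (mul3 PH PHt PH (leg23 oH Sp) (leg13 oHt S)) (leg12 oH Spp).
Proof.
rewrite S_HE S_pE S_ppE mul3_leg12_leg23 // mul3_leg23_leg13_leg12 //.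
apply: funext => -[a1 a2]; apply: funext => -[s t]; apply: funext => -[r1 r2].
rewrite /tsum3 !sum_pair /=; expand_products.
rewrite (big_only1 a2) //; last by kdelta_vanish.
rewrite (big_only1 r1) //; last by kdelta_vanish.
rewrite [RHS](big_only1 s) //; last by kdelta_vanish.
rewrite [RHS]exchange_big [RHS](big_only1 t) //; last by kdelta_vanish.
rewrite /kdelta !eqxx /=; distribute; apply: eq_bigr => e _.
by homog_case (m e t a2) deg_m; homog_case (mu r1 s e) deg_mu; sign_cases.
Qed.

Lemma St12_St23 :
  mul3 PHt PHt PHt (leg12 oHt St) (leg23 oHt St)
  = mul3 PHt PHt PHt (mul3 PHt PHt PHt (leg23 oHt St) (leg13 oHt St)) (leg12 oHt St).
Proof.
rewrite S_tE mul3_leg12_leg23 // mul3_leg23_leg13_leg12 //.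
apply: funext => -[a1 a2]; apply: funext => -[s t]; apply: funext => -[r1 r2].
rewrite /tsum3 !sum_pair /=; expand_products.
rewrite (big_only1 a1) //; last by kdelta_vanish.
rewrite (big_only1 r2) //; last by kdelta_vanish.
rewrite [RHS](big_only1 s) //; last by kdelta_vanish.
rewrite [RHS]exchange_big [RHS](big_only1 t) //; last by kdelta_vanish.
rewrite /kdelta !eqxx /=; distribute; apply: eq_bigr => e _.
by sign_cases.
Qed.

End HeisenbergDoubles.

Theorem mainTheorem4 (R : realType) (A : hopf_data R[i]) (a b' : nat) :
  is_graded_hopf A ->
  let PH := @PH _ A in let PHt := @PHt _ A in
  let oH := @oneH _ A in let oHt := @oneHt _ A in
  let S := @S_H _ A in let St := @S_t _ A in
  let Sp := @S_p _ A a b' in let Spp := @S_pp _ A a b' in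
  [/\ (* positions H(A_dual), H(A), H(A) *)
      mul3 PHt PH PH (mul3 PHt PH PH (leg12 oH Sp) (leg13 oH Sp)) (leg23 oHt S)
        = mul3 PHt PH PH (leg23 oHt S) (leg12 oH Sp),
      (* positions H(A_dual), H(A_dual), H(A) *)
      mul3 PHt PHt PH (leg12 oH St) (leg23 oHt Sp)
        = mul3 PHt PHt PH (mul3 PHt PHt PH (leg23 oHt Sp) (leg13 oHt Sp)) (leg12 oH St),
      (* positions H(A), H(A), H(A_dual) *)
      mul3 PH PH PHt (mul3 PH PH PHt (leg12 oHt S) (leg13 oH Spp)) (leg23 oH Spp)
        = mul3 PH PH PHt (leg23 oH Spp) (leg12 oHt S),
      (* positions H(A), H(A_dual), H(A_dual) *)
      mul3 PH PHt PHt (leg12 oHt Spp) (leg23 oH St)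
        = mul3 PH PHt PHt (mul3 PH PHt PHt (leg23 oH St) (leg13 oHt Spp)) (leg12 oHt Spp) &
      [/\ (* positions H(A_dual), H(A), H(A_dual) *)
          mul3 PHt PH PHt (mul3 PHt PH PHt (leg12 oHt Sp) (leg13 oH St)) (leg23 oHt Spp)
            = mul3 PHt PH PHt (leg23 oHt Spp) (leg12 oHt Sp),
          (* positions H(A), H(A_dual), H(A) *)
          mul3 PH PHt PH (leg12 oH Spp) (leg23 oH Sp)
            = mul3 PH PHt PH (mul3 PH PHt PH (leg23 oH Sp) (leg13 oHt S)) (leg12 oH Spp) &
          (* Yang-Baxter for St, positions H(A_dual), H(A_dual), H(A_dual) *)
          mul3 PHt PHt PHt (leg12 oHt St) (leg23 oHt St)
            = mul3 PHt PHt PHt (mul3 PHt PHt PHt (leg23 oHt St) (leg13 oHt St)) (leg12 oHt St)]].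
Proof.
case=> homA _ unitA _ [counitA _ comul_unitA counit_mulA _]; cbv zeta.
split; [exact: Sp12_Sp13_S23 | exact: St12_Sp23 | exact: S12_Spp13_Spp23 |
        exact: Spp12_St23 | ].
by split; [exact: Sp12_St13_Spp23 | exact: Spp12_Sp23 | exact: St12_St23].
Qed.
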